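(* Let $p$ be a prime. Then $$I_{p^{p+1}}=\Big(p,\prod_{i=0}^{p-1}(X-i)\Big)^{p+1}+\big(H(X)\big),\qquad H(X)=\prod_{i=0}^{p^2-1}(X-i).$$
   Context: $I_{p^n}=p^n\mathrm{Int}(\mathbb{Z})\cap\mathbb{Z}[X]=\{f\in\mathbb{Z}[X] : p^n\mid f(a)\text{ for all }a\in\mathbb{Z}\}$, where $\mathrm{Int}(\mathbb{Z})=\{f\in\mathbb{Q}[X]: f(\mathbb{Z})\subseteq\mathbb{Z}\}$. *)

From HB Require Import structures.
From mathcomp Require Import all_boot all_order all_algebra.
Set Implicit Arguments. Unset Strict Implicit. Unset Printing Implicit Defensive.
Import Order.TTheory GRing.Theory Num.Theory.
Local Open Scope ring_scope.

Definition polyZ := {poly int}.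

Definition Ipn (p n : nat) (f : {poly int}) : Prop :=
  forall a : int, ((p ^ n)%N%:Z %| f.[a])%Z.

Definition ideal_gen (S : {poly int} -> Prop) (f : {poly int}) : Prop :=
  exists s : seq ({poly int} * {poly int}),
    (forall q, q \in s -> S q.2) /\ f = \sum_(q <- s) q.1 * q.2.

Definition ideal_mul (I J : {poly int} -> Prop) : {poly int} -> Prop :=
  ideal_gen (fun h => exists a b, I a /\ J b /\ h = a * b).

Definition ideal_add (I J : {poly int} -> Prop) (f : {poly int}) : Prop :=
  exists a b, I a /\ J b /\ f = a + b.

Definition ideal_pow (I : {poly int} -> Prop) (n : nat) : {poly int} -> Prop :=
  iter n (ideal_mul I) (ideal_gen (fun h => h = 1)).

Definition fallX (m : nat) : {poly int} := \prod_(i < m) ('X - (i%:R)%:P).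

From HB Require Import structures.
From mathcomp Require Import all_boot all_order all_algebra.
From mathcomp Require Import ring zify.
Set Implicit Arguments. Unset Strict Implicit. Unset Printing Implicit Defensive.
Import Order.TTheory GRing.Theory Num.Theory.
Local Open Scope ring_scope.

(* Let J = (p, F_p) with F_m = prod_{i<m} (X - i) (fallX m) and H = F_{p^2}.
   The inclusion J^{p+1} + (H) <= I_{p^{p+1}} holds because both generators of
   J take values divisible by p (p | p! | F_p(a)) and p^{p+1} | (p^2)! | H(a),
   since m! divides any product of m consecutive integers.
   For the converse, divide f by the monic H: f = qH + r with deg r < p^2, so
   it suffices to show r in J^{p+1}.  Write r in the Newton basis
   r = sum_{m < p^2} c_m F_m, peeling off the top coefficient one degree at a
   time.  Evaluating at the integer m, where F_k(m) = 0 for k > m and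
   F_m(m) = m!, the hypothesis p^{p+1} | r(m) together with the induction
   gives p^{p+1} | c_m m!.  With m = jp + s (j < p) one has v_p(m!) = j, hence
   p^{p+1-j} | c_m; and F_m is divisible by the j blocks
   prod_{s<p} (X - s - kp) = F_p (mod p), each lying in J.  So c_m F_m is in
   p^{p+1-j} J^j <= J^{p+1}. *)

Definition is_ideal (T : {poly int} -> Prop) :=
  [/\ T 0, (forall x y, T x -> T y -> T (x + y)) & (forall c x, T x -> T (c * x))].

Section Ideals.

Variable T : {poly int} -> Prop.
Hypothesis idT : is_ideal T.

Lemma ideal_add_mem x y : T x -> T y -> T (x + y).
Proof. by case: idT => _ + _; apply. Qed.

Lemma ideal_mull c x : T x -> T (c * x).
Proof. by case: idT => _ _; apply. Qed.

Lemma ideal_sum (I : eqType) (s : seq I) (F : I -> {poly int}) :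
  (forall i, i \in s -> T (F i)) -> T (\sum_(i <- s) F i).
Proof.
elim: s => [|x s IH] Fs; first by rewrite big_nil; case: idT.
rewrite big_cons; apply: ideal_add_mem; first by apply: Fs; rewrite mem_head.
by apply: IH => i si; apply: Fs; rewrite in_cons si orbT.
Qed.

Lemma ideal_gen_least (S : {poly int} -> Prop) :
  (forall h, S h -> T h) -> forall x, ideal_gen S x -> T x.
Proof.
move=> ST x [s [Ss ->]]; apply: ideal_sum => q /Ss /ST; exact: ideal_mull.
Qed.

End Ideals.

Lemma ideal_gen_ideal (S : {poly int} -> Prop) : is_ideal (ideal_gen S).
Proof.
split.
- by exists [::]; rewrite big_nil.
- move=> x y [s [Ss ->]] [t [St ->]]; exists (s ++ t); split; last by rewrite big_cat.
  by move=> q; rewrite mem_cat => /orP [/Ss|/St].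
- move=> c x [s [Ss ->]]; exists (map (fun q => (c * q.1, q.2)) s); split.
  + by move=> q /mapP [q' /Ss Sq ->].
  + by rewrite big_map mulr_sumr; apply: eq_bigr => q _; rewrite mulrA.
Qed.

Lemma ideal_gen_mem (S : {poly int} -> Prop) x : S x -> ideal_gen S x.
Proof.
move=> Sx; exists [:: (1, x)]; rewrite big_seq1 mul1r; split=> // q.
by rewrite inE => /eqP ->.
Qed.

Lemma ideal_pow_ideal I n : is_ideal (ideal_pow I n).
Proof. by case: n => [|n]; apply: ideal_gen_ideal. Qed.

Lemma ideal_pow0 I x : ideal_pow I 0 x.
Proof.
rewrite -[x]mulr1; apply: ideal_mull; first exact: ideal_gen_ideal.
exact: ideal_gen_mem.
Qed.

Lemma ideal_powS I n a b : I a -> ideal_pow I n b -> ideal_pow I n.+1 (a * b).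
Proof. by move=> Ia Pb; apply: ideal_gen_mem; exists a, b. Qed.

Lemma ideal_pow_mul I m n x y :
  ideal_pow I m x -> ideal_pow I n y -> ideal_pow I (m + n) (x * y).
Proof.
elim: m x => [|m IH] x Px Py.
  by rewrite add0n; apply: ideal_mull => //; apply: ideal_pow_ideal.
rewrite addSn; case: Px => s [Ss ->]; rewrite mulr_suml.
apply: ideal_sum; first exact: ideal_pow_ideal.
move=> q /Ss [u [v [Iu [Pv ->]]]]; rewrite -!mulrA.
by apply: ideal_mull; first apply: ideal_pow_ideal; apply: ideal_powS => //; apply: IH.
Qed.

Lemma Ipn_ideal p n : is_ideal (Ipn p n).
Proof.
split=> [a|x y Ix Iy a|c x Ix a]; first by rewrite horner0 dvdz0.
- by rewrite hornerD rpredD.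
- by rewrite hornerM dvdz_mull.
Qed.

Lemma Ipn_mul p m n x y : Ipn p m x -> Ipn p n y -> Ipn p (m + n) (x * y).
Proof. by move=> Ix Iy a; rewrite hornerM expnD PoszM dvdz_mul. Qed.

Lemma fact_ppart p k : prime p -> (k < p ^ 2)%N ->
  exists u, (k`! = p ^ (k %/ p) * u)%N /\ coprime p u.
Proof.
move=> p_pr; have p_gt0 := prime_gt0 p_pr.
elim: k => [|k IH] lt_k; first by exists 1%N; rewrite div0n coprimen1.
have [u [k_fact p_u]] := IH (ltnW lt_k).
rewrite factS (divnS _ p_gt0); case: (boolP (p %| k.+1)%N) => /= [/dvdnP[m km] | p_k].
  have lt_mp : (m < p)%N by rewrite -(ltn_pmul2r p_gt0) -km (leq_trans lt_k).
  have m_gt0 : (0 < m)%N by case: m km {lt_mp}.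
  exists (m * u)%N; split; first by rewrite k_fact km expnS; ring.
  rewrite coprimeMr p_u andbT prime_coprime //.
  by apply/negP => /(dvdn_leq m_gt0); rewrite leqNgt lt_mp.
exists (k.+1 * u)%N; split; first by rewrite k_fact add0n; ring.
by rewrite coprimeMr p_u andbT prime_coprime.
Qed.

(* p^(p+1) divides (p^2)!: the p-part of (p^2 - 1)! is p^(p-1). *)
Lemma ppow_dvd_fact_psquare p : prime p -> (p ^ p.+1 %| (p ^ 2)`!)%N.
Proof.
move=> p_pr; have [q def_p] : exists q, p = q.+1 by case: p p_pr => // q; exists q.
have lt_pred : ((p ^ 2).-1 < p ^ 2)%N by rewrite prednK // expn_gt0 def_p.
have [u [fact_eq _]] := fact_ppart p_pr lt_pred.
have quot : ((p ^ 2).-1 %/ p = q)%N.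
  by rewrite def_p (_ : _.-1 = q * q.+1 + q)%N ?divnMDl ?divn_small ?addn0 //; nia.
rewrite -(prednK (_ : 0 < p ^ 2)%N) ?expn_gt0 ?def_p // factS prednK // -def_p.
by rewrite fact_eq quot mulnA -expnD addnC addn2 def_p dvdn_mulr.
Qed.

Lemma fallX_monic m : fallX m \is monic.
Proof. exact: monic_prod_XsubC. Qed.

Lemma size_fallX m : size (fallX m) = m.+1.
Proof.
rewrite /fallX -(big_mkord xpredT (fun i => 'X - i%:R%:P)) /index_iota subn0.
by rewrite -(big_map (fun i => i%:R) xpredT (fun x => 'X - x%:P)) size_prod_XsubC size_map size_iota.
Qed.

Lemma horner_fallX m (a : int) : (fallX m).[a] = \prod_(i < m) (a - i%:R).
Proof. by rewrite /fallX horner_prod; apply: eq_bigr => i _; rewrite hornerXsubC. Qed.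

Lemma horner_fallX_nat m (b : nat) : (fallX m).[b%:R] = (b ^_ m)%N%:R.
Proof.
rewrite horner_fallX; have [lt_bm|le_mb] := ltnP b m.
  by rewrite (bigD1 (Ordinal lt_bm)) //= subrr mul0r ffact_small.
rewrite ffact_prod natr_prod; apply: eq_bigr => i _.
by rewrite natrB // (leq_trans (ltnW (ltn_ord i))).
Qed.

Lemma rising_ffact b n : (\prod_(i < n) (b.+1 + i) = (b + n) ^_ n)%N.
Proof.
rewrite ffact_prod -(big_mkord xpredT (fun i => b.+1 + i)%N) big_rev_mkord subn0.
by apply: eq_bigr => i _; have := ltn_ord i; lia.
Qed.

(* F_m takes values divisible by m! on all of Z: on naturals b these are
   the falling factorials b^_m, on negative integers -(b + 1) they are, up to
   sign, the rising factorials (b + 1) ... (b + m) = (b + m)^_m. *)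
Lemma fact_dvd_horner_fallX m (a : int) : ((m`!)%:Z %| (fallX m).[a])%Z.
Proof.
have fact_dvd_ffact k : ((m`!)%:Z %| (k ^_ m)%N%:Z)%Z.
  by rewrite -bin_ffact PoszM dvdz_mull.
case: a => b; first by rewrite -natz horner_fallX_nat natz.
rewrite horner_fallX (_ : \prod_(i < m) _ = \prod_(i < m) (-1 * (b.+1 + i)%N%:R)).
  by rewrite big_split /= -natr_prod rising_ffact natz dvdz_mull.
by apply: eq_bigr => i _; rewrite NegzE !natz; lia.
Qed.

Lemma fallX_split m n : (m <= n)%N ->
  fallX n = fallX m * \prod_(s < n - m) ('X - (s + m)%N%:R%:P).
Proof.
move=> le_mn; rewrite /fallX -!(big_mkord xpredT (fun i => 'X - i%:R%:P)).
by rewrite (big_cat_nat (leq0n m) le_mn) -{2}[m]add0n big_addn !big_mkord.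
Qed.

Lemma size_sub_Newton_term (g : {poly int}) m :
  (size g <= m.+1)%N -> (size (g - (g`_m)%:P * fallX m)%R <= m)%N.
Proof.
move=> size_g; apply/leq_sizeP => k le_mk; rewrite coefB coefCM.
have [lt_km|lt_mk|->] := ltngtP k m.
- by move: le_mk; rewrite leqNgt lt_km.
- have size_F : (size (fallX m) <= k)%N by rewrite size_fallX.
  by rewrite (nth_default 0 size_F) (nth_default 0 (leq_trans size_g lt_mk)) mulr0 subr0.
- have /monicP := fallX_monic m; rewrite lead_coefE size_fallX /= => ->.
  by rewrite mulr1 subrr.
Qed.

Section IdealJ.

Variable p : nat.

Definition J : {poly int} -> Prop :=
  ideal_gen (fun h => h = p%:R%:P \/ h = fallX p).

Lemma J_ideal : is_ideal J.
Proof. exact: ideal_gen_ideal. Qed.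

Lemma J_p : J p%:R%:P.
Proof. by apply: ideal_gen_mem; left. Qed.

Lemma J_fallX : J (fallX p).
Proof. by apply: ideal_gen_mem; right. Qed.

Lemma ppow_in_Jpow e : ideal_pow J e (p%:R%:P ^+ e).
Proof.
elim: e => [|e IH]; first exact: ideal_pow0.
by rewrite exprS; apply: ideal_powS => //; apply: J_p.
Qed.

(* The k-th block of p consecutive factors X - (kp + s), s < p, is congruent
   to F_p modulo p, hence lies in J. *)
Lemma J_block k : J (\prod_(s < p) ('X - (s + k * p)%N%:R%:P)).
Proof.
pose cong (u v : {poly int}) := exists h, u - v = p%:R%:P * h.
have cong_mul u1 u2 v1 v2 : cong u1 v1 -> cong u2 v2 -> cong (u1 * u2) (v1 * v2).
  move=> [h1 e1] [h2 e2]; exists (h1 * u2 + v1 * h2).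
  have -> : u1 * u2 - v1 * v2 = (u1 - v1) * u2 + v1 * (u2 - v2) by ring.
  by rewrite e1 e2; ring.
have [h eh] : cong (\prod_(s < p) ('X - (s + k * p)%N%:R%:P)) (fallX p).
  apply: (big_ind2 cong) => [|u1 u2 v1 v2|s _]; first by exists 0; rewrite subrr mulr0.
    exact: cong_mul.
  exists (- k%:R)%:P; rewrite !natrD !natrM !(polyCD, polyCN, polyCM); ring.
rewrite -[X in J X](subrK (fallX p)) eh.
by apply: (ideal_add_mem J_ideal) J_fallX; rewrite mulrC; apply: (ideal_mull J_ideal) J_p.
Qed.

(* F_(jp + r) lies in J^j, being divisible by its first j blocks. *)
Lemma fallX_in_Jpow j r : ideal_pow J j (fallX (j * p + r)).
Proof.
rewrite (fallX_split (leq_addr r _)) mulrC; apply: ideal_mull; first exact: ideal_pow_ideal.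
elim: j => [|j IH]; first exact: ideal_pow0.
rewrite (fallX_split (_ : j * p <= j.+1 * p)%N) ?mulSn ?leq_addl // mulrC addnK.
exact: ideal_powS (J_block j) IH.
Qed.

Hypothesis p_prime : prime p.

Lemma J_sub_Ip x : J x -> Ipn p 1 x.
Proof.
apply: ideal_gen_least; first exact: Ipn_ideal.
move=> h [->|->] a; rewrite expn1; first by rewrite hornerC natz dvdzz.
apply: dvdz_trans (fact_dvd_horner_fallX p a).
by rewrite dvdzE /= dvdn_fact // prime_gt0 /=.
Qed.

Lemma Jpow_sub_Ipn n x : ideal_pow J n x -> Ipn p n x.
Proof.
elim: n x => [|n IH] x; first by move=> _ a; rewrite dvd1z.
apply: ideal_gen_least; first exact: Ipn_ideal.
by move=> h [a [b [Ja [Pb ->]]]]; rewrite -add1n; apply: Ipn_mul (J_sub_Ip Ja) (IH _ Pb).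
Qed.

(* H = F_(p^2) lies in I_{p^(p+1)}, since p^(p+1) | (p^2)! | H(a). *)
Lemma fallX_psquare_in_Ipn : Ipn p p.+1 (fallX (p ^ 2)).
Proof.
move=> a; apply: dvdz_trans (fact_dvd_horner_fallX _ a).
by rewrite dvdzE ppow_dvd_fact_psquare.
Qed.

(* The key step: if p^(p+1) divides c * m! with m < p^2, then c F_m lies in
   J^(p+1), because m! carries exactly p^(m / p) and F_m lies in J^(m / p). *)
Lemma Newton_term_in_Jpow m (c : int) : (m < p ^ 2)%N ->
  ((p ^ p.+1)%N%:Z %| c * (m`!)%:R)%Z -> ideal_pow J p.+1 (c%:P * fallX m).
Proof.
move=> lt_m dvd_c; have p_gt0 := prime_gt0 p_prime.
have [u [fact_m p_u]] := fact_ppart p_prime lt_m.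
set j := (m %/ p)%N in fact_m.
have lt_jp : (j < p)%N by rewrite ltn_divLR // -expnSr.
set e := (p.+1 - j)%N; have ej : (e + j = p.+1)%N by rewrite /e; lia.
have /dvdzP [d ->] : ((p ^ e)%N%:Z %| c)%Z.
  move: dvd_c; rewrite fact_m -ej !dvdzE abszM natz /= expnD mulnCA [(p ^ e * _)%N]mulnC.
  by rewrite dvdn_pmul2l ?expn_gt0 ?p_gt0 // Gauss_dvdl // coprimeXl.
rewrite -natz natrX polyCM polyC_exp -mulrA; apply: ideal_mull; first exact: ideal_pow_ideal.
by rewrite -ej (divn_eq m p); apply: ideal_pow_mul; [apply: ppow_in_Jpow | apply: fallX_in_Jpow].
Qed.

Lemma vanishing_in_Jpow m (g : {poly int}) : (m <= p ^ 2)%N ->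
  (size g <= m)%N -> (forall a : nat, (a < m)%N -> ((p ^ p.+1)%N%:Z %| g.[a%:R])%Z) ->
  ideal_pow J p.+1 g.
Proof.
elim: m g => [|m IH] g le_m size_g dvd_g.
  by move: size_g; rewrite size_poly_leq0 => /eqP ->; case: (ideal_pow_ideal J p.+1).
set g' := g - (g`_m)%:P * fallX m.
have g'_in : ideal_pow J p.+1 g'.
  apply: IH (ltnW le_m) (size_sub_Newton_term size_g) _ => a lt_am.
  by rewrite hornerD hornerN hornerCM horner_fallX_nat ffact_small // mulr0 subr0 dvd_g // ltnW.
have term_in : ideal_pow J p.+1 ((g`_m)%:P * fallX m).
  apply: Newton_term_in_Jpow => //.
  have := dvd_g m (ltnSn m); rewrite -{1}(subrK ((g`_m)%:P * fallX m) g) hornerD.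
  rewrite hornerCM horner_fallX_nat ffactnn rpredDl //; apply: (Jpow_sub_Ipn g'_in).
rewrite -(subrK ((g`_m)%:P * fallX m) g).
by apply: (ideal_add_mem (ideal_pow_ideal J p.+1)).
Qed.

End IdealJ.

Theorem mainTheorem18 (p : nat) (hp : prime p) (f : {poly int}) :
  Ipn p p.+1 f <->
  ideal_add
    (ideal_pow (ideal_gen (fun h => h = (p%:R)%:P \/ h = fallX p)) p.+1)
    (ideal_gen (fun h => h = fallX (p ^ 2)%N)) f.
Proof.
split=> [If | [a [b [Ja [Hb ->]]]]]; last first.
  apply: (ideal_add_mem (Ipn_ideal p p.+1)); first exact (Jpow_sub_Ipn hp Ja).
  move: Hb; apply: ideal_gen_least; first exact: Ipn_ideal.
  by move=> h ->; apply: fallX_psquare_in_Ipn.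
have f_eq := Pdiv.RingMonic.rdivp_eq (fallX_monic (p ^ 2)) f.
set q := Pdiv.Ring.rdivp _ _ in f_eq; set r := Pdiv.Ring.rmodp _ _ in f_eq.
exists r, (q * fallX (p ^ 2)); split; [|split; last by rewrite addrC].
- apply: (vanishing_in_Jpow hp (leqnn _)) => //.
    rewrite -ltnS -(size_fallX (p ^ 2)) Pdiv.Ring.ltn_rmodpN0 //.
    by rewrite monic_neq0 // fallX_monic.
  move=> a lt_a; rewrite -(addKr (q * fallX (p ^ 2)) r) addrC -f_eq.
  by rewrite hornerD hornerN hornerM horner_fallX_nat ffact_small // mulr0 subr0.
- by apply: (ideal_mull (ideal_gen_ideal _)); apply: ideal_gen_mem.
Qed.
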